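(* Let $q\ge 2$, $r\ge 1$, $\rho\ge 2$ be integers and $N=r+\rho-1$. Assume that there exists a $q$-ary MDS code of length $N$ and minimum distance $\rho$. Then $R_q(r,\rho,0)=\frac{r}{N}$.
   Context: A $q$-ary code of length $n$ is a subset $\mathcal{C}\subseteq Q^n$, $|Q|=q$, with minimum distance the minimum Hamming distance between distinct codewords and dimension $k=\log_q|\mathcal{C}|$. For $I\subseteq[n]$, $\mathcal{C}_I$ is the projection onto coordinates in $I$. $\mathcal{C}$ is an $(n,k,r,\rho)$ LRC code if every coordinate $i\in[n]$ lies in a subset $\mathcal{R}_i$ of size at most $r+\rho-1$ with $\mathcal{C}_{\mathcal{R}_i}$ of minimum distance at least $\rho$. Let $M_q(n,r,\rho,\delta n)$ be the maximum cardinality of a $q$-ary $(n,k,r,\rho)$ LRC code with minimum distance $\delta n$, and $R_q(r,\rho,\delta)=\limsup_{n\to\infty}\frac1n\log_q M_q(n,r,\rho,\delta n)$. An MDS code of length $N$ and distance $\rho$ is a $q$-ary code of length $N$, minimum distance $\rho$ and cardinality $q^{N-\rho+1}$. *)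

From HB Require Import structures.
From mathcomp Require Import all_boot all_order all_algebra.
From mathcomp Require Import all_classical all_reals all_analysis.
Set Implicit Arguments. Unset Strict Implicit. Unset Printing Implicit Defensive.
Import Order.TTheory GRing.Theory Num.Theory.
Local Open Scope ring_scope.

Definition word (A : finType) (n : nat) := {ffun 'I_n -> A}.
Definition code (A : finType) (n : nat) := {set word A n}.

Definition hdist (A : finType) (n : nat) (x y : word A n) : nat :=
  #|[set i : 'I_n | x i != y i]|.

(* minimum distance of C is at least d (vacuous if |C| <= 1) *)
Definition min_dist_ge (A : finType) (n : nat) (C : code A n) (d : nat) : bool :=
  [forall x in C, forall y in C, (x != y) ==> (d <= hdist x y)%N].

Definition min_dist_eq (A : finType) (n : nat) (C : code A n) (d : nat) : bool :=
  min_dist_ge C d &&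
  [exists x in C, exists y in C, (x != y) && (hdist x y == d)].

(* projection C_I of C onto the coordinates in I : coordinates outside I
   are erased (set to None), so Hamming distances of projected words are
   distances restricted to I. *)
Definition proj (A : finType) (n : nat) (I : {set 'I_n}) (C : code A n)
  : code (option A) n :=
  [set ([ffun j => if j \in I then Some (x j) else None] : word (option A) n) | x : word A n in C].

(* (n,k,r,rho) LRC code (k = log_q |C| is not constrained) *)
Definition is_LRC (A : finType) (n r rho : nat) (C : code A n) : bool :=
  [forall i : 'I_n, exists Ri : {set 'I_n},
     [&& i \in Ri, (#|Ri| <= r + rho - 1)%N & min_dist_ge (proj Ri C) rho]].

Definition M_LRC (R : realType) (q n r rho : nat) (delta : R) : nat :=
  \max_(C : code 'I_q n |
          is_LRC r rho C &&
          [forall x in C, forall y in C,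
             (x != y) ==> (delta * n%:R <= (hdist x y)%:R)])
     #|C|.

Local Open Scope ereal_scope.
Definition R_LRC (R : realType) (q r rho : nat) (delta : R) : \bar R :=
  limn_esup (fun n : nat =>
    ((ln (M_LRC q n r rho delta)%:R / ln q%:R) / n%:R)%:E).

Definition exists_MDS (q N rho : nat) : Prop :=
  exists C : code 'I_q N,
    min_dist_eq C rho /\ #|C| = (q ^ (N - rho + 1))%N.

(* Write N = r + rho - 1. Upper bound: cover the coordinates greedily by repair
   groups; when a group R_i adds s new coordinates to the covered set V, put all
   but rho - 1 of them into a set D. As the projection onto R_i has distance rho,
   codewords agreeing on D agree on V and R_i, and N (s - (rho - 1)) <= r s keeps
   N |D| <= r |V|. So a codeword is determined by its restriction to D, whence
   M^N <= q^(r n). Lower bound: concatenating floor(n / N) codewords of the MDS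
   code (of size q^r), the blocks being the repair groups, and padding with a
   constant symbol gives an LRC code of size q^(r floor(n / N)). Hence
   log_q M / n converges to r / N, which is then also its limsup. *)

From Pilot Require Import Defs.
From HB Require Import structures.
From mathcomp Require Import all_boot all_order all_algebra.
From mathcomp Require Import all_classical all_reals all_analysis.
(* Re-imported so that [subsetP] denotes the finite-set lemma again, not the
   classical-set one of the analysis library. *)
From mathcomp Require Import fintype finset.
From mathcomp Require Import zify.
Import Order.TTheory GRing.Theory Num.Theory numFieldNormedType.Exports.
Set Implicit Arguments. Unset Strict Implicit. Unset Printing Implicit Defensive.

Definition determines (A : finType) (n : nat) (C : Defs.code A n) (D V : {set 'I_n})
    : Prop :=
  {in C &, forall x y : word A n, {in D, x =1 y} -> {in V, x =1 y}}.

Lemma card_determinesT_leq (A : finType) (n : nat) (C : Defs.code A n) (D : {set 'I_n}) :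
  determines C D [set: 'I_n] -> (#|C| <= #|A| ^ #|D|)%N.
Proof.
move=> detD.
pose restr (x : word A n) : {ffun 'I_#|D| -> A} := [ffun k => x (enum_val k)].
have restr_inj : {in C &, injective restr}.
  move=> x y xC yC /ffunP eq_xy; apply/ffunP => j.
  apply: (detD x y xC yC) => [i iD|]; last by rewrite inE.
  by have := eq_xy (enum_rank_in iD i); rewrite !ffunE enum_rankK_in.
rewrite -(card_in_imset restr_inj).
by apply: leq_trans (max_card _) _; rewrite card_ffun card_ord.
Qed.

Lemma proj_min_dist_agree (A : finType) (n rho : nat) (C : Defs.code A n)
    (I : {set 'I_n}) (x y : word A n) :
  min_dist_ge (Defs.proj I C) rho -> x \in C -> y \in C ->
  (#|[set j in I | x j != y j]| < rho)%N -> {in I, x =1 y}.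
Proof.
move=> /forallP distI xC yC few_diffs j jI.
set px : word (option A) n := [ffun j => if j \in I then Some (x j) else None].
set py : word (option A) n := [ffun j => if j \in I then Some (y j) else None].
have [eq_p|neq_p] := eqVneq px py.
  by move/ffunP: eq_p => /(_ j); rewrite !ffunE jI => -[].
have pxC : px \in Defs.proj I C by apply/imsetP; exists x.
have pyC : py \in Defs.proj I C by apply/imsetP; exists y.
have := distI px; rewrite pxC => /forallP /(_ py); rewrite pyC neq_p /= /hdist.
suff -> : [set i | px i != py i] = [set j in I | x j != y j] by rewrite leqNgt few_diffs.
by apply/setP => k; rewrite !inE !ffunE; case: (k \in I).
Qed.

Lemma exists_subset_card (T : finType) (S : {set T}) (k : nat) :
  (k <= #|S|)%N -> exists2 B : {set T}, B \subset S & #|B| = k.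
Proof.
move=> /card_geqP [s [uniq_s <- sS]].
exists [set x in s]; first by apply/subsetP => x; rewrite inE => /sS.
by rewrite cardsE (card_uniqP uniq_s).
Qed.

Lemma repair_rate_leq (r rho s : nat) :
  (s <= r + rho - 1)%N -> ((r + rho - 1) * (s - (rho - 1)) <= r * s)%N.
Proof. nia. Qed.

Section LRCUpperBound.

Variables (A : finType) (n r rho : nat) (C : Defs.code A n).
Hypotheses (C_LRC : is_LRC r rho C) (rho_gt0 : (0 < rho)%N).
Local Notation N := (r + rho - 1)%N.

Lemma LRC_determines_extend (D V : {set 'I_n}) (i : 'I_n) :
  determines C D V -> (N * #|D| <= r * #|V|)%N ->
  exists D' V' : {set 'I_n}, [/\ i \in V', V \subset V', determines C D' V'
                               & (N * #|D'| <= r * #|V'|)%N].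
Proof.
move=> detDV countDV.
have /existsP [Ri /and3P [iRi cardRi distRi]] := forallP C_LRC i.
set S := Ri :\: V.
have [T TS cardT] := exists_subset_card (leq_subr (rho - 1) #|S|).
exists (D :|: T), (V :|: Ri); split.
- by rewrite inE iRi orbT.
- exact: subsetUl.
- move=> x y xC yC agreeDT.
  have agreeV : {in V, x =1 y}.
    by apply: detDV => // j jD; apply: agreeDT; rewrite inE jD.
  have agreeRi : {in Ri, x =1 y}.
    apply: proj_min_dist_agree distRi xC yC _.
    have diffs_sub : [set j in Ri | x j != y j] \subset S :\: T.
      apply/subsetP => j; rewrite !inE => /andP [jRi xy_j].
      rewrite jRi andbT; apply/andP; split.
        by apply: contra xy_j => jT; apply/eqP/agreeDT; rewrite inE jT orbT.
      by apply: contra xy_j => jV; apply/eqP/agreeV.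
    apply: leq_ltn_trans (subset_leq_card diffs_sub) _.
    by rewrite (cardsDS TS) cardT; lia.
  by move=> j; rewrite inE => /orP [/agreeV|/agreeRi].
- have cardVRi : #|V :|: Ri| = (#|V| + #|S|)%N.
    by rewrite cardsU cardsD [Ri :&: V]setIC addnBA ?subset_leq_card ?subsetIr.
  have cardS : (#|S| <= N)%N by apply: leq_trans cardRi; rewrite cardsD leq_subr.
  apply: (@leq_trans (N * (#|D| + #|T|))).
    by rewrite leq_mul2l cardsU leq_subr orbT.
  by rewrite cardVRi !mulnDr cardT leq_add // repair_rate_leq.
Qed.

Lemma LRC_determining_set :
  exists D : {set 'I_n}, determines C D [set: 'I_n] /\ (N * #|D| <= r * n)%N.
Proof.
suff [D [V [enumV detDV countDV]]] : exists D V : {set 'I_n},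
    [/\ {subset enum 'I_n <= V}, determines C D V & (N * #|D| <= r * #|V|)%N].
  have VT : V = [set: 'I_n] by apply/setP => j; rewrite inE enumV ?mem_enum.
  by subst V; exists D; rewrite cardsT card_ord in countDV.
elim: (enum 'I_n) => [|i s IH].
  by exists set0, set0; split => //; rewrite cards0 muln0.
have [D [V [sV detDV countDV]]] := IH.
have [D' [V' [iV' VV' detDV' countDV']]] := LRC_determines_extend i detDV countDV.
by exists D', V'; split => // j; rewrite inE => /orP [/eqP -> | /sV /(subsetP VV')].
Qed.

Lemma LRC_card_bound : (0 < #|A|)%N -> (#|C| ^ N <= #|A| ^ (r * n))%N.
Proof.
move=> A_gt0; have [D [detD countD]] := LRC_determining_set.
have [-> | N_gt0] := posnP N; first by rewrite expn0 expn_gt0 A_gt0.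
apply: (@leq_trans ((#|A| ^ #|D|) ^ N)).
  by rewrite leq_exp2r ?(card_determinesT_leq detD).
by rewrite -expnM mulnC leq_pexp2l.
Qed.

End LRCUpperBound.

Section Concatenation.

Variables (A : finType) (a0 : A) (N n : nat) (C0 : Defs.code A N).
Hypothesis N_gt0 : (0 < N)%N.
Local Notation m := (n %/ N)%N.
Local Notation blocks := {ffun 'I_m -> {x | x \in C0}}.

(* Block b < m of the word is the codeword c b; the last n %% N coordinates
   are padded with a0. *)
Definition concat_word (c : blocks) : word A n :=
  [ffun i : 'I_n => if insub (i %/ N)%N is Some b
                    then val (c b) (Ordinal (ltn_pmod i N_gt0)) else a0].

Definition concat_code : Defs.code A n := [set concat_word c | c : blocks].

Lemma concat_word_block (c : blocks) (j : 'I_n) (b : 'I_m) : (j %/ N)%N = b ->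
  concat_word c j = val (c b) (Ordinal (ltn_pmod j N_gt0)).
Proof.
move=> jb; rewrite ffunE; case: insubP => [b' _ b'E|]; last by rewrite jb ltn_ord.
by rewrite (_ : b' = b) //; apply: val_inj; rewrite b'E.
Qed.

Lemma concat_word_pad (c : blocks) (j : 'I_n) : (m <= j %/ N)%N -> concat_word c j = a0.
Proof. by move=> jm; rewrite ffunE; case: insubP => // b; rewrite ltnNge jm. Qed.

Lemma block_index_subproof (b : 'I_m) (k : 'I_N) : (b * N + k < n)%N.
Proof. by have := leq_divM n N; have := ltn_ord b; have := ltn_ord k; nia. Qed.

Definition block_index (b : 'I_m) (k : 'I_N) : 'I_n := Ordinal (block_index_subproof b k).

Lemma block_index_div b k : (block_index b k %/ N)%N = b.
Proof. by rewrite /= divnMDl // (divn_small (ltn_ord k)) addn0. Qed.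

Lemma block_index_inj b : injective (block_index b).
Proof. by move=> k k' /(congr1 val) /addnI; apply: val_inj. Qed.

Lemma concat_word_index (c : blocks) b k : concat_word c (block_index b k) = val (c b) k.
Proof.
rewrite (concat_word_block c (block_index_div b k)); apply: congr1.
by apply: val_inj; rewrite /= modnMDl modn_small.
Qed.

Lemma concat_word_inj : injective concat_word.
Proof.
move=> c c' /ffunP eq_cc'; apply/ffunP => b; apply/val_inj/ffunP => k.
by have := eq_cc' (block_index b k); rewrite !concat_word_index.
Qed.

Lemma card_concat_code : #|concat_code| = (#|C0| ^ m)%N.
Proof.
by rewrite card_imset ?cardsT ?card_ffun ?card_sig ?card_ord //; exact: concat_word_inj.
Qed.

Lemma card_block_leq (b : nat) : (#|[set j : 'I_n | j %/ N == b]| <= N)%N.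
Proof.
pose offset (j : 'I_n) : 'I_N := Ordinal (ltn_pmod j N_gt0).
have offset_inj : {in [set j : 'I_n | j %/ N == b] &, injective offset}.
  move=> j j'; rewrite !inE => /eqP jb /eqP j'b /(congr1 val) /= jj'.
  by apply: val_inj; rewrite /= (divn_eq j N) (divn_eq j' N) jb j'b jj'.
by rewrite -(card_in_imset offset_inj) (leq_trans (max_card _)) ?card_ord.
Qed.

Lemma concat_code_LRC (r rho : nat) :
  min_dist_ge C0 rho -> (N <= r + rho - 1)%N -> is_LRC r rho concat_code.
Proof.
move=> C0_dist N_le; apply/forallP => i; apply/existsP.
exists [set j : 'I_n | j %/ N == i %/ N]%N.
rewrite inE eqxx (leq_trans (card_block_leq _) N_le) /=.
apply/forallP => px; apply/implyP => /imsetP [x /imsetP [c _ ->] ->].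
apply/forallP => py; apply/implyP => /imsetP [y /imsetP [c' _ ->] ->].
apply/implyP => neq_proj.
have [i_pad|i_blk] := leqP m (i %/ N)%N.
  case/eqP: neq_proj; apply/ffunP => j; rewrite [LHS]ffunE [RHS]ffunE inE.
  by case: eqP => // jBi; rewrite !concat_word_pad // jBi.
pose b : 'I_m := Ordinal i_blk.
have neq_blocks : val (c b) != val (c' b).
  apply: contraNneq neq_proj => eq_b; apply/eqP/ffunP => j.
  rewrite [LHS]ffunE [RHS]ffunE inE; case: eqP => // jb.
  by rewrite (concat_word_block c (b := b) jb) (concat_word_block c' (b := b) jb) eq_b.
have /forallP/(_ (val (c b))) := C0_dist; rewrite (valP (c b)) /=.
move=> /forallP/(_ (val (c' b))); rewrite (valP (c' b)) neq_blocks /= => /leq_trans; apply.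
rewrite /hdist -(card_imset _ (@block_index_inj b)); apply: subset_leq_card.
apply/subsetP => j /imsetP [k]; rewrite inE => neq_k ->.
by rewrite inE [X in X != _]ffunE [X in _ != X]ffunE inE block_index_div eqxx /=
  !concat_word_index.
Qed.

End Concatenation.

Lemma M_LRC_ge (R : realType) (q n r rho : nat) (delta : R) (C : Defs.code 'I_q n) :
  (delta <= 0)%R -> is_LRC r rho C -> (#|C| <= M_LRC q n r rho delta)%N.
Proof.
move=> delta_le0 C_LRC; apply: leq_bigmax_cond; rewrite C_LRC /=.
apply/forallP => x; apply/implyP => _; apply/forallP => y; apply/implyP => _.
by apply/implyP => _; rewrite (le_trans (mulr_le0_ge0 delta_le0 (ler0n _ _))).
Qed.

Lemma M_LRC_expn_le (R : realType) (q n r rho : nat) (delta : R) :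
  (0 < q)%N -> (0 < rho)%N -> (M_LRC q n r rho delta ^ (r + rho - 1) <= q ^ (r * n))%N.
Proof.
move=> q_gt0 rho_gt0.
apply: (big_ind (fun k => k ^ (r + rho - 1) <= q ^ (r * n))%N).
- by case: (r + rho - 1)%N => [|N]; [rewrite expn0 expn_gt0 q_gt0 | rewrite exp0n].
- by move=> a b a_le b_le; rewrite /maxn; case: ifP.
- move=> C /andP [C_LRC _].
  by have := LRC_card_bound C_LRC rho_gt0; rewrite card_ord; apply.
Qed.

Section Rates.

Variable R : realType.
Local Open Scope ring_scope.
Local Open Scope classical_set_scope.

Lemma ln_le_expn (a b k l : nat) : (0 < a)%N -> (0 < b)%N ->
  (a ^ k <= b ^ l)%N -> k%:R * ln (a%:R : R) <= l%:R * ln (b%:R : R).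
Proof.
move=> a_gt0 b_gt0 le_ab.
rewrite !mulr_natl -!lnXn ?ltr0n // -!natrX.
by rewrite ler_ln ?posrE ?ltr0n ?expn_gt0 ?a_gt0 ?b_gt0 // ler_nat.
Qed.

Lemma invn_cvg0 : (fun n : nat => (n%:R : R)^-1) @ \oo --> 0.
Proof.
have := @cvg_harmonic R.
by rewrite -(@cvg_shiftS R^o (fun n : nat => (n%:R : R)^-1)).
Qed.

Lemma divn_ratio_cvg (N : nat) : (0 < N)%N ->
  (fun n : nat => (n %/ N)%:R / n%:R : R) @ \oo --> (N%:R : R)^-1.
Proof.
move=> N_gt0; have N_gt0R : 0 < (N%:R : R) by rewrite ltr0n.
apply: (@squeeze_cvgr _ _ _ _ (fun n => N%:R^-1 - n%:R^-1) (cst N%:R^-1)).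
- exists 1%N => // n /= n_gt0; have n_gt0R : 0 < (n%:R : R) by rewrite ltr0n.
  apply/andP; split.
  + rewrite ler_pdivlMr // mulrBl mulVf ?gt_eqF // lerBlDr mulrC ler_pdivrMr //.
    by rewrite natr1 -natrM ler_nat ltnW // ltn_ceil.
  + by rewrite ler_pdivrMr // mulrC ler_pdivlMr // -natrM ler_nat leq_divM.
- by rewrite -[X in _ --> X]subr0; apply: cvgB; [exact: cvg_cst | exact: invn_cvg0].
- exact: cvg_cst.
Qed.

Lemma log_rate_cvg (q r N : nat) (M : nat -> nat) : (1 < q)%N -> (0 < N)%N ->
  (forall n, q ^ (r * (n %/ N)) <= M n)%N -> (forall n, M n ^ N <= q ^ (r * n))%N ->
  (fun n => ln (M n)%:R / ln q%:R / n%:R : R) @ \oo --> (r%:R / N%:R : R).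
Proof.
move=> q_gt1 N_gt0 M_ge M_le.
have q_gt0 : (0 < q)%N by apply: ltnW.
have lnq_gt0 : 0 < ln (q%:R : R) by rewrite ln_gt0 // ltr1n.
apply: (@squeeze_cvgr _ _ _ _ (fun n => r%:R * ((n %/ N)%:R / n%:R))
                             (cst (r%:R / N%:R))).
- exists 1%N => // n /= n_gt0; have n_gt0R : 0 < (n%:R : R) by rewrite ltr0n.
  have Mn_gt0 : (0 < M n)%N by apply: leq_trans (M_ge n); rewrite expn_gt0 q_gt0.
  have lnM_ge : (r * (n %/ N))%:R * ln (q%:R : R) <= 1%:R * ln (M n)%:R.
    by apply: ln_le_expn; rewrite ?expn1.
  rewrite mul1r in lnM_ge.
  have lnM_le : N%:R * ln ((M n)%:R : R) <= (r * n)%:R * ln q%:R.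
    exact: ln_le_expn (M_le n).
  apply/andP; split.
  + by rewrite mulrA ler_pM2r ?invr_gt0 // ler_pdivlMr // -natrM.
  + rewrite ler_pdivrMr // mulrAC ler_pdivlMr ?ltr0n // mulrAC ler_pdivrMr //.
    by rewrite mulrC -natrM.
- by apply: cvgM; [exact: cvg_cst | exact: divn_ratio_cvg].
- exact: cvg_cst.
Qed.

Lemma limn_esup_EFin_cvg (u : R^nat) (l : R) :
  u @ \oo --> l -> limn_esup (fun n => (u n)%:E) = l%:E.
Proof.
by move=> u_l; apply: (cvg_limn_einf_sup _).2; apply: cvg_EFin => //; exact: nearW.
Qed.

End Rates.

Theorem corollary2 (R : realType) (q r rho : nat) :
  (2 <= q)%N -> (1 <= r)%N -> (2 <= rho)%N ->
  exists_MDS q (r + rho - 1) rho ->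
  R_LRC q r rho (0 : R) = ((r%:R / (r + rho - 1)%:R : R)%R)%:E.
Proof.
move=> q_gt1 r_gt0 rho_gt1 [C0 [/andP [C0_dist _] C0_card]].
have q_gt0 : (0 < q)%N by apply: ltnW.
have rho_gt0 : (0 < rho)%N by apply: ltnW.
have N_gt0 : (0 < r + rho - 1)%N by rewrite -addnBA // addn_gt0 r_gt0.
have C0_card_r : #|C0| = (q ^ r)%N by rewrite C0_card; congr (_ ^ _)%N; lia.
apply: limn_esup_EFin_cvg; apply: log_rate_cvg => // n.
  rewrite expnM -C0_card_r -(card_concat_code (Ordinal q_gt0) n C0 N_gt0).
  exact/M_LRC_ge/concat_code_LRC.
exact: M_LRC_expn_le.
Qed.
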